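(* Let $(X,d)$ be a metric space with probability measure $\mu$, let $Y$ be a countable set and $f:X\to Y$. Let $\kappa:\mathbb{Z}^+\to\mathbb{Z}^+$ satisfy $\sum_{n=1}^\infty \rho^{\kappa(n)}=\infty$ for every $0<\rho\le 1$. Let $\{z_n\}_{n\ge1}$ be generated by the process $\mathcal{S}(\kappa,\Phi)$ with the distance-to-sample-set heuristic $\Phi(x,S)=d(x,S)=\inf\{d(x,s): s\in S\}$, and let $\zeta_n$ be the nearest neighbor prediction function on $Z_n$. If $x\in\operatorname{supp}(\mu)$ is not an $f$-boundary point, then $\zeta_n(x)\to f(x)$ as $n\to\infty$ with probability one.
   Context: Setting: $(X,d)$ is a metric space equipped with a probability measure $\mu$; $Y$ is a countable set; $f:X\to Y$ is the ''true function''. For $y\in Y$, $X_y=f^{-1}(y)$. $B_\epsilon(x)$ is the open ball of radius $\epsilon$ about $x$. The support $\operatorname{supp}(\mu)$ is the set of $x\in X$ with $\mu(B_\epsilon(x))>0$ for all $\epsilon>0$. A point $b\in X$ is an $f$-boundary point iff $\mu(B_\epsilon(b)\cap(X\setminus X_{f(b)}))>0$ for every $\epsilon>0$. The process $\mathcal{S}(\kappa,\Phi)$, for a function $\kappa:\mathbb{Z}^+\to\mathbb{Z}^+$ and a selection heuristic $\Phi:X\times\mathcal{P}(X)\to\mathbb{R}\cup\{+\infty\}$: set $Z_0=\emptyset$; for $n=1,2,\dots$, draw a set of $\kappa(n)$ candidates independently at random according to $\mu$ (independently of everything before), let $z_n$ be a candidate $s$ maximizing $\Phi(s,Z_{n-1})$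 (ties broken uniformly at random), and set $Z_n=\{z_1,\dots,z_n\}$. Nearest neighbor prediction: $\zeta_n(x)=f(z_\iota)$ where $\iota=\arg\min_{i\le n}d(x,z_i)$, ties broken uniformly at random. *)

From HB Require Import structures.
From mathcomp Require Import all_boot all_order all_algebra.
From mathcomp Require Import all_classical all_reals all_analysis.
Set Implicit Arguments. Unset Strict Implicit. Unset Printing Implicit Defensive.
Import Order.TTheory GRing.Theory Num.Theory.
Local Open Scope classical_set_scope.
Local Open Scope ring_scope.

Section Defs.
Context {R : realType}.

Definition is_metric {X : Type} (d : X -> X -> R) : Prop :=
  [/\ (forall x y, 0 <= d x y), (forall x y, d x y = 0 <-> x = y),
      (forall x y, d x y = d y x) & (forall x y z, d x z <= d x y + d y z)].

Definition mball {X : Type} (d : X -> X -> R) (x : X) (e : R) : set X :=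
  [set y | d x y < e].

Definition mopen {X : Type} (d : X -> X -> R) (A : set X) : Prop :=
  forall x, A x -> exists2 e : R, 0 < e & mball d x e `<=` A.

Definition in_support {dX} {X : measurableType dX} (d : X -> X -> R)
    (mu : probability X R) (x : X) : Prop :=
  forall e : R, 0 < e -> (0 < mu (mball d x e))%E.

Definition fiber {X Y : Type} (f : X -> Y) (y : Y) : set X := f @^-1` [set y].

Definition f_boundary_point {dX} {X : measurableType dX} {Y : Type}
    (d : X -> X -> R) (mu : probability X R) (f : X -> Y) (b : X) : Prop :=
  forall e : R, 0 < e -> (0 < mu (mball d b e `&` ~` fiber f (f b)))%E.

(* distance-to-sample-set heuristic Phi(x,S) = d(x,S) = inf_{s in S} d(x,s),
   with inf of the empty set = +oo *)
Definition dist_to_set {X : eqType} (d : X -> X -> R) (x : X) (S : seq X) : \bar R :=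
  ereal_inf [set (d x s)%:E | s in [set` S]].

(* Uniform choice among the maximizers of phi on {0,..,k-1}, driven by a
   uniform random number u in [0,1): the floor(u * m)-th maximizer
   (in increasing index order), m = number of maximizers. *)
Definition select_index (phi : nat -> \bar R) (k : nat) (u : R) : nat :=
  let mx := \big[Order.max/-oo%E]_(i <- iota 0 k) phi i in
  let M := [seq i <- iota 0 k | phi i == mx] in
  nth (head 0%N M) M (Num.truncn (u * (size M)%:R)).

(* The process S(kappa, Phi): cand n i (i < kappa n) are the candidates of
   round n >= 1, u n the tie-breaking number of round n.
   sample_seq ... n = Z_n = [:: z_1; ...; z_n]. *)
Fixpoint sample_seq {X : Type} (Phi : X -> seq X -> \bar R) (kappa : nat -> nat)
    (cand : nat -> nat -> X) (u : nat -> R) (n : nat) : seq X :=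
  match n with
  | 0 => [::]
  | m.+1 =>
      let Z := sample_seq Phi kappa cand u m in
      rcons Z (cand m.+1
        (select_index (fun i => Phi (cand m.+1 i) Z) (kappa m.+1) (u m.+1)))
  end.

(* Nearest neighbour prediction zeta(x) on the sample list Z, ties broken
   uniformly using v in [0,1); None if Z is empty. *)
Definition nn_predict {X Y : Type} (d : X -> X -> R) (f : X -> Y) (Z : seq X)
    (v : R) (x : X) : option Y :=
  match Z with
  | [::] => None
  | z0 :: _ =>
      let mn := \big[Order.min/+oo%E]_(z <- Z) (d x z)%:E in
      let I := [seq i <- iota 0 (size Z) | (d x (nth z0 Z i))%:E == mn] in
      let i := nth (head 0%N I) I (Num.truncn (v * (size I)%:R)) in
      Some (f (nth z0 Z i))
  end.

Definition mutually_independent {dO} {O : measurableType dO} (P : probability O R)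
    {I : eqType} (D : set I) (G : I -> set (set O)) : Prop :=
  forall (J : seq I) (E : I -> set O), uniq J ->
    (forall j, j \in J -> D j) -> (forall j, j \in J -> G j (E j)) ->
    fine (P (\bigcap_(j in [set` J]) E j)) = \prod_(j <- J) fine (P (E j)).

Definition preimage_class {dO dT} {O : measurableType dO} {T : measurableType dT}
    (g : O -> T) : set (set O) :=
  [set g @^-1` A | A in measurable].

(* index of the random inputs: candidate (n,i), selection tie-break n,
   prediction tie-break n *)
Definition rand_index := ((nat * nat) + nat + nat)%type.

Definition used_index (kappa : nat -> nat) : set rand_index :=
  fun j => match j with
           | inl (inl (n, i)) => (0 < n)%N /\ (i < kappa n)%N
           | inl (inr n) => (0 < n)%N
           | inr n => (0 < n)%N
           end.

(* The randomness driving S(kappa, Phi) and the nearest neighbour predictions: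
   candidates C n i (n >= 1, i < kappa n) drawn according to mu, uniform
   tie-breaking numbers U n, V n in [0,1), all mutually independent. *)
Definition process_randomness {dX dO} {X : measurableType dX}
    {O : measurableType dO} (P : probability O R) (mu : probability X R)
    (kappa : nat -> nat) (C : nat -> nat -> O -> X) (U V : nat -> O -> R) : Prop :=
  [/\ (forall n i, (0 < n)%N -> (i < kappa n)%N ->
         measurable_fun setT (C n i) /\
         forall A, measurable A -> P (C n i @^-1` A) = mu A),
      (forall n, (0 < n)%N ->
         measurable_fun setT (U n) /\ measurable_fun setT (V n) /\
         (forall A : set R, measurable A ->
            P (U n @^-1` A) = lebesgue_measure (A `&` `[0%R, 1%R[)) /\
         (forall A : set R, measurable A ->
            P (V n @^-1` A) = lebesgue_measure (A `&` `[0%R, 1%R[))) &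
      mutually_independent P (used_index kappa)
        (fun j => match j with
                  | inl (inl (n, i)) => preimage_class (C n i)
                  | inl (inr n) => preimage_class (U n)
                  | inr n => preimage_class (V n)
                  end)].

End Defs.

(** Since x is not an f-boundary point, some ball B = B_e(x) meets the other
    fibres of f only in a mu-null set, and B has mass rho > 0 because x lies
    in the support of mu.  Almost surely, no candidate ever falls in B with a
    label different from f(x).  The event that all kappa(n) candidates of
    round n fall in B has probability rho^kappa(n); these events are
    independent and their probabilities have divergent sum, so by the second
    Borel-Cantelli lemma one of them occurs almost surely.  From that round
    on the sample contains a point of B, hence so does the nearest neighbour
    of x, which therefore carries the label f(x). *)

From HB Require Import structures.
From mathcomp Require Import all_boot all_order all_algebra.
From mathcomp Require Import all_classical all_reals all_analysis.
From mathcomp Require Import ring lra.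
Set Implicit Arguments. Unset Strict Implicit. Unset Printing Implicit Defensive.
Import Order.TTheory GRing.Theory Num.Theory.
Local Open Scope classical_set_scope.
Local Open Scope ring_scope.

Lemma nth_head_mem (T : eqType) (x0 : T) (s : seq T) t :
  s != [::] -> nth (head x0 s) s t \in s.
Proof.
case: s => [//|a s] _; have [ts|st] := ltnP t (size (a :: s)).
  exact: mem_nth.
by rewrite nth_default // mem_head.
Qed.

Lemma select_index_lt (R : realType) (phi : nat -> \bar R) k (u : R) :
  (0 < k)%N -> (select_index phi k u < k)%N.
Proof.
move=> k_gt0; rewrite /select_index; set M := [seq _ <- _ | _].
have [->|M0] := eqVneq M [::]; first by rewrite nth_nil.
have := nth_head_mem 0%N (Num.truncn (u * (size M)%:R)) M0.
by rewrite mem_filter mem_iota add0n => /andP[_ /andP[]].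
Qed.

Lemma bigmin_EFin_attained (R : realType) (T : eqType) (F : T -> R) (s : seq T) :
  s != [::] ->
  exists2 z, z \in s & \big[Order.min/+oo%E]_(t <- s) (F t)%:E = (F z)%:E.
Proof.
elim: s => [//|a [|b s] IH] _.
  by exists a; rewrite ?mem_head // big_seq1.
rewrite big_cons; have [z zs ->] := IH isT; rewrite minEle.
case: ifP => _; first by exists a; rewrite ?mem_head.
by exists z; rewrite // in_cons zs orbT.
Qed.

Lemma bigmin_EFin_le (R : realType) (T : eqType) (F : T -> R) (s : seq T) z :
  z \in s -> (\big[Order.min/+oo%E]_(t <- s) (F t)%:E <= (F z)%:E)%E.
Proof.
elim: s => [//|a s IH]; rewrite in_cons big_cons minEle => /orP[/eqP->|/IH zs].
  by case: ifP => // /negbT; rewrite -ltNge => /ltW.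
by case: ifP => // /le_trans; apply.
Qed.

Lemma nn_predict_nearest (R : realType) (X : eqType) (Y : Type)
    (d : X -> X -> R) (f : X -> Y) (Z : seq X) (v : R) (x : X) :
  Z != [::] ->
  exists2 z, z \in Z & nn_predict d f Z v x = Some (f z) /\
    forall z', z' \in Z -> d x z <= d x z'.
Proof.
case: Z => [//|z0 Z'] Zne; rewrite /nn_predict.
set Z := z0 :: Z' in Zne *; set mn := \big[_/_]_(_ <- _) _; set I := [seq _ <- _ | _].
have [zm zmZ mnE] := bigmin_EFin_attained (d x) Zne.
have I0 : I != [::].
  apply/eqP => I0; suff : index zm Z \in I by rewrite I0.
  by rewrite mem_filter mem_iota index_mem zmZ nth_index // /mn mnE eqxx.
have := nth_head_mem 0%N (Num.truncn (v * (size I)%:R)) I0.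
set i := nth _ I _; rewrite mem_filter mem_iota add0n => /andP[/eqP imin /andP[_ iZ]].
exists (nth z0 Z i); first exact: mem_nth.
by split=> // z' z'Z; rewrite -lee_fin imin bigmin_EFin_le.
Qed.

Section sample_seq.
Variables (R : realType) (X : eqType) (Phi : X -> seq X -> \bar R)
  (kappa : nat -> nat) (cand : nat -> nat -> X) (u : nat -> R).
Hypothesis kappa_gt0 : forall n, (0 < n)%N -> (0 < kappa n)%N.
Local Notation Z := (sample_seq Phi kappa cand u).

Lemma mem_sample_seq n z : z \in Z n ->
  exists n' i, [/\ (0 < n')%N, (i < kappa n')%N & z = cand n' i].
Proof.
elim: n => [//|n IH] /=; rewrite mem_rcons in_cons => /orP[/eqP ->|/IH //].
by do 2 eexists; split; last reflexivity; rewrite ?select_index_lt ?kappa_gt0.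
Qed.

Lemma sample_seq_subset m n : (m <= n)%N -> {subset Z m <= Z n}.
Proof.
move=> /subnK <-; elim: (n - m)%N => [//|k IH] z /IH zZ.
by rewrite addSn /= mem_rcons in_cons zZ orbT.
Qed.

Lemma sample_seq_last n : exists2 i, (i < kappa n.+1)%N & cand n.+1 i \in Z n.+1.
Proof.
exists (select_index (fun i => Phi (cand n.+1 i) (Z n)) (kappa n.+1) (u n.+1)).
  by rewrite select_index_lt ?kappa_gt0.
by rewrite /= mem_rcons mem_head.
Qed.

Lemma nn_predict_sample_seq (Y : Type) (d : X -> X -> R) (f : X -> Y)
    (v : nat -> R) (x : X) (e : R) m :
  (forall i, (i < kappa m.+1)%N -> mball d x e (cand m.+1 i)) ->
  (forall n i, (0 < n)%N -> (i < kappa n)%N ->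
     mball d x e (cand n i) -> f (cand n i) = f x) ->
  forall n, (m < n)%N -> nn_predict d f (Z n) (v n) x = Some (f x).
Proof.
move=> round_in_ball ball_label n mn.
have [i ik iZ] := sample_seq_last m.
have Zn0 : Z n != [::].
  by apply/eqP => Zn0; have := sample_seq_subset mn iZ; rewrite Zn0.
have [z zZ [-> zmin]] := nn_predict_nearest d f (v n) x Zn0.
have zB : mball d x e z.
  exact: le_lt_trans (zmin _ (sample_seq_subset mn iZ)) (round_in_ball _ ik).
have [n' [i' [n'_gt0 i'k zE]]] := mem_sample_seq zZ.
by rewrite zE ball_label // -zE.
Qed.

End sample_seq.

Lemma prod_1B_le_expR (R : realType) (a : nat -> R) (s : seq nat) :
  {in s, forall n, a n <= 1} ->
  \prod_(n <- s) (1 - a n) <= expR (- \sum_(n <- s) a n).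
Proof.
elim: s => [|n s IH] a_le1; first by rewrite !big_nil oppr0 expR0.
have {}IH : \prod_(k <- s) (1 - a k) <= expR (- \sum_(k <- s) a k).
  by apply: IH => k ks; rewrite a_le1 // in_cons ks orbT.
rewrite !big_cons opprD expRD; apply: ler_pM => //.
- by rewrite subr_ge0 a_le1 ?mem_head.
- by rewrite big_seq; apply: prodr_ge0 => k ks; rewrite subr_ge0 a_le1 // in_cons ks orbT.
- exact: expR_ge1Dx.
Qed.

Section independent_events.
Variables (R : realType) (d : measure_display) (T : measurableType d)
  (P : probability T R) (E : nat -> set T) (p : nat -> R).
Hypothesis mE : forall n, (0 < n)%N -> measurable (E n).
Hypothesis PE : forall s, uniq s -> all (leq 1) s ->
  P (\big[setI/setT]_(n <- s) E n) = (\prod_(n <- s) p n)%:E.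

Let measurable_bigsetI (G : nat -> set T) s :
  (forall n, (0 < n)%N -> measurable (G n)) -> all (leq 1) s ->
  measurable (\big[setI/setT]_(n <- s) G n).
Proof.
move=> mG /allP s_gt0; rewrite big_seq; apply: bigsetI_measurable => n ns.
exact/mG/s_gt0.
Qed.

Let mEC n : (0 < n)%N -> measurable (~` E n).
Proof. by move=> /mE /measurableC. Qed.

Lemma probability_ge0_le1 n : (0 < n)%N -> 0 <= p n <= 1.
Proof.
move=> n_gt0; have := @PE [:: n] isT; rewrite /= n_gt0 !big_seq1 => /(_ isT) PEn.
by rewrite -!lee_fin -PEn measure_ge0 probability_le1 //; exact: mE.
Qed.

Lemma probability_bigsetI_setC s t : uniq (s ++ t) -> all (leq 1) (s ++ t) ->
  P (\big[setI/setT]_(n <- s) ~` E n `&` \big[setI/setT]_(n <- t) E n) =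
  (\prod_(n <- s) (1 - p n) * \prod_(n <- t) p n)%:E.
Proof.
elim: s t => [|a s IH] t; first by rewrite big_nil setTI big_nil mul1r; exact: PE.
rewrite /= => /andP[a_st uniq_st] /andP[a_gt0 st_gt0].
set F := \big[setI/setT]_(n <- s) ~` E n `&` \big[setI/setT]_(n <- t) E n.
have uniq_sat : uniq (s ++ a :: t) by rewrite -cat1s uniq_catCA /= a_st.
have sat_gt0 : all (leq 1) (s ++ a :: t) by rewrite all_cat /= a_gt0 -all_cat.
have mF : measurable F.
  move: st_gt0; rewrite all_cat => /andP[s_gt0 t_gt0].
  exact: measurableI (measurable_bigsetI mEC s_gt0) (measurable_bigsetI mE t_gt0).
have PF_fin : (P F < +oo)%E by rewrite (le_lt_trans (probability_le1 _ _)) ?ltry.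
have PFD : P (F `\` E a) = (P F - P (F `&` E a))%E.
  exact: measureD mF (mE a_gt0) PF_fin.
rewrite big_cons -setIA -/F setIC -setDE PFD.
rewrite (_ : F `&` E a = \big[setI/setT]_(n <- s) ~` E n `&`
                       \big[setI/setT]_(n <- a :: t) E n); last first.
  by rewrite big_cons /F -setIA (setIC _ (E a)).
rewrite IH // /F IH // big_cons big_cons -EFinB; congr EFin; ring.
Qed.

Lemma second_borel_cantelli :
  (\sum_(1 <= n <oo) (p n)%:E = +oo)%E ->
  P.-negligible [set w | forall n, (0 < n)%N -> ~ E n w].
Proof.
move=> psum; set F := [set w | _].
have mF : measurable F.
  rewrite (_ : F = \bigcap_(n in [set n | (0 < n)%N]) ~` E n).
    by apply: bigcap_measurable => [|n /mEC //]; exists 1%N.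
  by apply/seteqP; split=> w wF n /wF.
have PF_le N : fine (P F) <= expR (- \sum_(1 <= n < N) p n).
  have iota_gt0 : all (leq 1) (index_iota 1 N).
    by apply/allP => n; rewrite mem_index_iota => /andP[].
  have := @probability_bigsetI_setC (index_iota 1 N) [::].
  rewrite !big_nil setIT mulr1 cats0 => /(_ (iota_uniq _ _) iota_gt0) PEN.
  apply: le_trans (prod_1B_le_expR _); last first.
    by move=> n; rewrite mem_index_iota => /andP[/probability_ge0_le1/andP[]].
  rewrite -lee_fin fineK ?fin_num_measure // -PEN le_measure ?inE //.
  - exact: measurable_bigsetI mEC iota_gt0.
  - by move=> w wF; rewrite -bigcap_seq => n; rewrite /= mem_index_iota => /andP[/wF].
have PF_sum_le1 N : fine (P F) * (1 + \sum_(1 <= n < N) p n) <= 1.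
  set S := \sum_(1 <= n < N) p n.
  apply: (@le_trans _ _ (fine (P F) * expR S)).
    by rewrite ler_wpM2l ?fine_ge0 ?measure_ge0 ?expR_ge1Dx.
  by rewrite -(expR0 R) -(addNr S) expRD ler_wpM2r ?expR_ge0 // PF_le.
suff PF0 : fine (P F) = 0.
  by exists F; split=> //; rewrite -[P F]fineK ?fin_num_measure // PF0.
apply/eqP; rewrite eq_le fine_ge0 ?measure_ge0 // andbT leNgt.
apply/negP => PF_gt0.
suff : (\sum_(1 <= n <oo) (p n)%:E <= (fine (P F))^-1%:E)%E.
  by rewrite psum leNgt ltry.
apply: lime_le.
  apply: is_cvg_nneseries => n n_gt0 _; rewrite lee_fin.
  by have /andP[] := probability_ge0_le1 n_gt0.
apply: nearW => N; rewrite sumEFin lee_fin -(ler_pM2l PF_gt0) mulfV ?gt_eqF //.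
by apply: le_trans (PF_sum_le1 N); rewrite ler_pM2l // lerDr.
Qed.

End independent_events.

Definition round_in (O X : Type) (kappa : nat -> nat) (C : nat -> nat -> O -> X)
    (B : set X) (n : nat) : set O :=
  \big[setI/setT]_(0 <= i < kappa n) C n i @^-1` B.

Lemma round_inP (O X : Type) (kappa : nat -> nat) (C : nat -> nat -> O -> X)
    (B : set X) n w :
  round_in kappa C B n w <-> forall i, (i < kappa n)%N -> B (C n i w).
Proof.
rewrite /round_in -bigcap_seq; split=> [inB i ik|inB i].
  by apply: inB; rewrite /= mem_index_iota.
by rewrite /= mem_index_iota => /inB.
Qed.

Section candidate_rounds.
Variables (R : realType) (dX dO : measure_display) (X : measurableType dX)
  (O : measurableType dO) (P : probability O R) (mu : probability X R)
  (kappa : nat -> nat) (C : nat -> nat -> O -> X) (U V : nat -> O -> R).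
Hypothesis randomness : process_randomness P mu kappa C U V.

Let measurable_candidate_preimage n i B : (0 < n)%N -> (i < kappa n)%N ->
  measurable B -> measurable (C n i @^-1` B).
Proof.
move=> n_gt0 ik mB; have [candidates _ _] := randomness.
have [mC _] := candidates n i n_gt0 ik.
by rewrite -[_ @^-1` _]setTI; exact: mC.
Qed.

Lemma measurable_round_in B : measurable B ->
  forall n, (0 < n)%N -> measurable (round_in kappa C B n).
Proof.
move=> mB n n_gt0; rewrite /round_in big_seq; apply: bigsetI_measurable => i.
by rewrite mem_index_iota => ik; exact: measurable_candidate_preimage.
Qed.

Lemma probability_rounds_in B : measurable B ->
  forall s, uniq s -> all (leq 1) s ->
  P (\big[setI/setT]_(n <- s) round_in kappa C B n) =
  (\prod_(n <- s) fine (mu B) ^+ kappa n)%:E.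
Proof.
move=> mB s uniq_s /allP s_gt0; have [candidates _ independent] := randomness.
pose J := [seq inl (inl (n, i)) : rand_index | n <- s, i <- index_iota 0 (kappa n)].
pose G (j : rand_index) := if j is inl (inl (n, i)) then C n i @^-1` B else setT.
have J_used j : j \in J ->
    exists n i, [/\ (0 < n)%N, (i < kappa n)%N & j = inl (inl (n, i))].
  case/allpairsPdep => n [i [ns]]; rewrite mem_index_iota => ik ->.
  by exists n, i; split=> //; exact: s_gt0.
have uniq_J : uniq J.
  apply: allpairs_uniq_dep => // [n _|[n1 i1] [n2 i2] _ _ /= [-> ->] //].
  exact: iota_uniq.
have := independent J G uniq_J.
rewrite bigcap_seq !big_allpairs_dep /= => PJ.
have mS : measurable (\big[setI/setT]_(n <- s) round_in kappa C B n).
  rewrite big_seq; apply: bigsetI_measurable => n ns.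
  exact: measurable_round_in mB _ (s_gt0 n ns).
rewrite -[LHS]fineK ?fin_num_measure //; congr EFin.
apply: eq_trans (PJ _ _) _.
- by move=> j /J_used [n [i [n_gt0 ik ->]]].
- move=> j /J_used [n [i [n_gt0 ik ->]]].
  by exists B => //; rewrite /G.
apply: eq_big_seq => n ns; rewrite -[kappa n in RHS]subn0 -prodr_const_nat.
rewrite big_seq_cond [RHS]big_seq_cond; apply: eq_bigr => i.
rewrite mem_index_iota andbT => ik.
by have [_ ->] := candidates n i (s_gt0 n ns) ik.
Qed.

Lemma candidates_in_negligible N : measurable N -> mu N = 0%E ->
  P.-negligible
    [set w | exists n i, [/\ (0 < n)%N, (i < kappa n)%N & N (C n i w)]].
Proof.
move=> mN muN0; have [candidates _ _] := randomness.
apply: (@negligibleS _ _ _ _ (\bigcup_n \bigcup_i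
    [set w | [/\ (0 < n)%N, (i < kappa n)%N & N (C n i w)]])).
  by move=> w [n [i inN]]; exists n => //; exists i.
apply: negligible_bigcup => n; apply: negligible_bigcup => i.
have [n_gt0|] := ltnP 0 n; last first.
  by move=> _; exists set0; split=> // w [].
have [ik|] := ltnP i (kappa n); last first.
  by move=> ki; exists set0; split=> // w [].
have [_ PC] := candidates n i n_gt0 ik.
exists (C n i @^-1` N); split=> [||w []] //; first exact: measurable_candidate_preimage.
exact: eq_trans (PC _ mN) muN0.
Qed.

End candidate_rounds.

Lemma mopen_mball (R : realType) (X : Type) (d : X -> X -> R) x e :
  (forall x y z, d x z <= d x y + d y z) -> mopen d (mball d x e).
Proof.
move=> d_triangle y xy; exists (e - d x y); first by rewrite subr_gt0.
by move=> z yz; rewrite /mball /= in xy yz *; have := d_triangle x y z; lra.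
Qed.

Lemma not_f_boundary_point_ball (R : realType) (dX : measure_display)
    (X : measurableType dX) (Y : Type) (d : X -> X -> R) (mu : probability X R)
    (f : X -> Y) x :
  ~ f_boundary_point d mu f x ->
  exists2 e : R, 0 < e & mu (mball d x e `&` ~` fiber f (f x)) = 0%E.
Proof.
move=> not_boundary; apply: contrapT => no_ball; apply: not_boundary => e e_gt0.
rewrite lt0e measure_ge0 andbT; apply/eqP => mu0.
by apply: no_ball; exists e.
Qed.

Theorem theorem1 (R : realType) (dX : measure_display) (X : measurableType dX)
    (d : X -> X -> R) (mu : probability X R) (Y : countType) (f : X -> Y)
    (dO : measure_display) (O : measurableType dO) (P : probability O R)
    (kappa : nat -> nat) (C : nat -> nat -> O -> X) (U V : nat -> O -> R)
    (x : X) :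
  is_metric d ->
  @measurable _ X = <<s mopen d >> ->
  (forall y : Y, measurable (fiber f y)) ->
  (forall n, (0 < n)%N -> (0 < kappa n)%N) ->
  (forall rho : R, 0 < rho <= 1 ->
     (\sum_(1 <= n <oo) ((rho ^+ kappa n)%:E) = +oo)%E) ->
  process_randomness P mu kappa C U V ->
  in_support d mu x ->
  ~ f_boundary_point d mu f x ->
  {ae P, forall w : O, exists N : nat, forall n : nat, (N <= n)%N ->
     nn_predict d f
       (sample_seq (dist_to_set d) kappa (fun m i => C m i w) (fun m => U m w) n)
       (V n w) x = Some (f x)}.
Proof.
move=> [_ _ _ d_triangle] mX mfiber kappa_gt0 sum_rho randomness x_supp.
move=> /not_f_boundary_point_ball[e e_gt0 mu_bad0].
set B := mball d x e.
have mB : measurable B by rewrite mX; apply: sub_gen_smallest; exact: mopen_mball.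
have mbad : measurable (B `&` ~` fiber f (f x)).
  exact/measurableI/measurableC/mfiber.
have rho01 : 0 < fine (mu B) <= 1.
  by rewrite -lte_fin -lee_fin fineK ?fin_num_measure ?x_supp ?probability_le1.
have := second_borel_cantelli (measurable_round_in randomness mB)
  (probability_rounds_in randomness mB) (sum_rho _ rho01).
move/(negligibleU (candidates_in_negligible randomness mbad mu_bad0)).
apply: negligibleS => w /= not_eventually.
apply: contrapT => /not_orP[no_bad_candidate some_round]; apply: not_eventually.
have [[|m] // _ round_m] : exists2 n, (0 < n)%N & round_in kappa C B n w.
  by apply: contrapT => no_round; apply: some_round => n n_gt0 ?; apply: no_round; exists n.
exists m.+1; apply: nn_predict_sample_seq => // [i|n i n_gt0 ik inB].
  by move: round_m => /round_inP; apply.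
by apply: contrapT => label_ne; apply: no_bad_candidate; exists n, i.
Qed.
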